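(* Define $\mathrm{Mex}(F)=\min(\mathbb{N}_0\setminus F)$ for $F\subseteq\mathbb{N}_0$, and $a+D=\{a+d:d\in D\}$. Define triples $v(n)=(v_1(n),v_2(n),v_3(n))$, $n\ge 0$, recursively by $v(0)=(0,0,0)$ and, for $n\ge 0$, with $F_n=\{v_i(k): 0\le k\le n,\ i\in\{1,2,3\}\}$ and $D_n=\bigcup_{k=0}^{n}\{v_2(k)-v_1(k),\,v_3(k)-v_2(k),\,v_3(k)-v_1(k)\}$, \[ v_1(n+1)=\mathrm{Mex}(F_n),\quad v_2(n+1)=\mathrm{Mex}\big((v_1(n+1)+D_n)\cup\{1,\dots,v_1(n+1)\}\cup F_n\big), \] \[ v_3(n+1)=\mathrm{Mex}\big((v_2(n+1)+D_n)\cup\{1,\dots,v_2(n+1)\}\cup F_n\big). \] Then the three sets $\{v_1(n): n\in\mathbb{N}\}$, $\{v_2(n): n\in\mathbb{N}\}$, $\{v_3(n): n\in\mathbb{N}\}$ are pairwise disjoint and their union is $\mathbb{N}=\{1,2,3,\dots\}$ (i.e., they form a partition of $\mathbb{N}$).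
   Context: $\mathbb{N}_0$ denotes the nonnegative integers and $\mathbb{N}=\mathbb{N}_0\setminus\{0\}$. These triples are the P-positions (sorted) of the 3D Wythoff $L^1$-Nim game. *)

From mathcomp Require Import all_boot.
Set Implicit Arguments. Unset Strict Implicit. Unset Printing Implicit Defensive.

(* Among 0..size F at least one value is missing, so searching iota 0 (size F).+1
   finds the least missing n; [find] returns its index, which equals n. *)
Definition mex (F : seq nat) : nat :=
  find (fun n => n \notin F) (iota 0 (size F).+1).

Definition triple := (nat * nat * nat)%type.
Definition t1 (t : triple) : nat := t.1.1.
Definition t2 (t : triple) : nat := t.1.2.
Definition t3 (t : triple) : nat := t.2.

Definition Fset (h : seq triple) : seq nat :=
  flatten [seq [:: t1 t; t2 t; t3 t] | t <- h].
(* D_n from the history (differences are nonnegative since v1 < v2 < v3) *)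
Definition Dset (h : seq triple) : seq nat :=
  flatten [seq [:: t2 t - t1 t; t3 t - t2 t; t3 t - t1 t] | t <- h].

Definition shift (a : nat) (D : seq nat) : seq nat := [seq a + d | d <- D].

(* v(n+1) computed from the history [:: v 0; ...; v n] *)
Definition step (h : seq triple) : triple :=
  let F := Fset h in
  let D := Dset h in
  let a1 := mex F in
  let a2 := mex (shift a1 D ++ iota 1 a1 ++ F) in
  let a3 := mex (shift a2 D ++ iota 1 a2 ++ F) in
  (a1, a2, a3).

Fixpoint hist (n : nat) : seq triple :=
  match n with
  | 0 => [:: (0, 0, 0)]
  | n'.+1 => let h := hist n' in rcons h (step h)
  end.

Definition v (n : nat) : triple := nth (0, 0, 0) (hist n) n.
Definition v1 n := t1 (v n).
Definition v2 n := t2 (v n).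
Definition v3 n := t3 (v n).

From mathcomp Require Import all_boot.
Set Implicit Arguments. Unset Strict Implicit. Unset Printing Implicit Defensive.

(* Every entry of v(n+1) is a Mex of a set containing F_n, so it is new, and
   0 < v1(n+1) < v2(n+1) < v3(n+1); this gives disjointness.  Since
   v1(n+1) = Mex F_n and the F_n increase, v1 is strictly increasing, hence
   v1(x+1) > x, and then x lies below Mex F_x, i.e. x is already an entry of
   some v(k) with k <= x. *)

Lemma mex_notin (F : seq nat) : mex F \notin F.
Proof.
have has_gap : has (fun n => n \notin F) (iota 0 (size F).+1).
  apply/hasPn => /= all_in.
  have := uniq_leq_size (iota_uniq 0 (size F).+1) (fun y Hy => negbNE (all_in y Hy)).
  by rewrite size_iota ltnn.
have := nth_find 0 has_gap.
by rewrite nth_iota // -[X in _ < X](size_iota 0) -has_find.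
Qed.

Lemma mex_min (F : seq nat) y : y \notin F -> mex F <= y.
Proof.
move=> yF; rewrite leqNgt; apply/negP => lt_y_mex.
have y_small : y < (size F).+1.
  by apply: leq_trans lt_y_mex _; rewrite -[X in _ <= X](size_iota 0) find_size.
by have := before_find 0 lt_y_mex; rewrite nth_iota ?add0n // yF.
Qed.

Lemma mem_lt_mex (F : seq nat) y : y < mex F -> y \in F.
Proof. by apply: contraLR; rewrite -leqNgt; apply: mex_min. Qed.

Lemma mex_subset (F G : seq nat) : {subset F <= G} -> mex F <= mex G.
Proof. by move=> FG; apply/mex_min/(contra (FG _))/mex_notin. Qed.

Lemma mex_gt0 (F : seq nat) : 0 \in F -> 0 < mex F.
Proof. by move=> F0; rewrite lt0n; apply: contraNneq (mex_notin F) => ->. Qed.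

Lemma mex_catr (E F : seq nat) : mex (E ++ F) \notin F.
Proof. by have := mex_notin (E ++ F); rewrite mem_cat negb_or => /andP[]. Qed.

Lemma mex_shift_gt a (D F : seq nat) :
  0 \in F -> a < mex (shift a D ++ iota 1 a ++ F).
Proof.
move=> F0; set b := mex _.
have b_gt0 : 0 < b by apply: mex_gt0; rewrite !mem_cat F0 !orbT.
have := mex_catr (shift a D) (iota 1 a ++ F).
by rewrite mem_cat mem_iota b_gt0 add1n ltnS negb_or -ltnNge => /andP[].
Qed.

Definition coords (n : nat) : seq nat := [:: v1 n; v2 n; v3 n].

Lemma size_hist n : size (hist n) = n.+1.
Proof. by elim: n => //= n IH; rewrite size_rcons IH. Qed.

Lemma vS n : v n.+1 = step (hist n).
Proof. by rewrite /v /= nth_rcons size_hist ltnn eqxx. Qed.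

Lemma hist_map n : hist n = map v (iota 0 n.+1).
Proof.
elim: n => [//|n IH].
by rewrite -[n.+2]addn1 iotaD map_cat -IH /= -vS cats1.
Qed.

Lemma FsetP y n :
  reflect (exists2 k, k <= n & y \in coords k) (y \in Fset (hist n)).
Proof.
rewrite hist_map; apply: (iffP flatten_mapP).
  by case=> t /mapP[k]; rewrite mem_iota => /= k_le -> y_in; exists k.
by case=> k k_le y_in; exists (v k) => //; apply: map_f; rewrite mem_iota.
Qed.

Lemma mem_coords_Fset x k n : k <= n -> x \in coords k -> x \in Fset (hist n).
Proof. by move=> k_le x_in; apply/FsetP; exists k. Qed.

Lemma Fset_hist0 n : 0 \in Fset (hist n).
Proof. exact: (@mem_coords_Fset 0 0). Qed.

Lemma v1S n : v1 n.+1 = mex (Fset (hist n)).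
Proof. by rewrite /v1 vS. Qed.

Lemma v2S n :
  v2 n.+1 = mex (shift (v1 n.+1) (Dset (hist n)) ++ iota 1 (v1 n.+1) ++ Fset (hist n)).
Proof. by rewrite /v2 /v1 vS. Qed.

Lemma v3S n :
  v3 n.+1 = mex (shift (v2 n.+1) (Dset (hist n)) ++ iota 1 (v2 n.+1) ++ Fset (hist n)).
Proof. by rewrite /v3 /v2 /v1 vS. Qed.

Lemma coordsS_fresh n x : x \in coords n.+1 -> x \notin Fset (hist n).
Proof.
rewrite /coords !inE => /or3P[] /eqP->; rewrite ?v1S ?v2S ?v3S ?catA.
- exact: mex_notin.
- exact: mex_catr.
- exact: mex_catr.
Qed.

Lemma v1S_gt0 n : 0 < v1 n.+1.
Proof. by rewrite v1S mex_gt0 ?Fset_hist0. Qed.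

Lemma v1_lt_v2 n : v1 n.+1 < v2 n.+1.
Proof. by rewrite v2S mex_shift_gt ?Fset_hist0. Qed.

Lemma v2_lt_v3 n : v2 n.+1 < v3 n.+1.
Proof. by rewrite v3S mex_shift_gt ?Fset_hist0. Qed.

Lemma coordsS_gt0 n x : x \in coords n.+1 -> 0 < x.
Proof.
have v2_gt0 := ltn_trans (v1S_gt0 n) (v1_lt_v2 n).
have v3_gt0 := ltn_trans v2_gt0 (v2_lt_v3 n).
by rewrite /coords !inE => /or3P[] /eqP->; rewrite ?v1S_gt0.
Qed.

Lemma coords_neq k n x y : k < n -> x \in coords k -> y \in coords n -> x <> y.
Proof.
case: n => // n; rewrite ltnS => k_le x_in y_in eq_xy.
have := coordsS_fresh y_in; rewrite -eq_xy.
by rewrite (mem_coords_Fset k_le x_in).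
Qed.

Lemma v1_ltS n : v1 n < v1 n.+1.
Proof.
case: n => [|n]; first exact: v1S_gt0.
rewrite ltn_neqAle [v1 n.+2]v1S v1S mex_subset; last first.
  by move=> y /FsetP[k k_le y_in]; apply: mem_coords_Fset y_in; apply: leqW.
rewrite andbT -v1S; apply: contraNneq (mex_notin (Fset (hist n.+1))) => <-.
by rewrite (@mem_coords_Fset _ n.+1) // inE eqxx.
Qed.

Lemma leq_v1 n : n <= v1 n.
Proof. by elim: n => // n IH; apply: leq_ltn_trans IH (v1_ltS n). Qed.

Lemma Fset_hist_self x : x \in Fset (hist x).
Proof. by apply: mem_lt_mex; rewrite -v1S leq_v1. Qed.

Theorem corollary2 :
  (forall n m : nat, 0 < n -> 0 < m ->
     [/\ v1 n <> v2 m, v1 n <> v3 m & v2 n <> v3 m]) /\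
  (forall x : nat, 0 < x <->
     exists2 n : nat, 0 < n & [\/ x = v1 n, x = v2 n | x = v3 n]).
Proof.
have coords_mem n : [/\ v1 n \in coords n, v2 n \in coords n & v3 n \in coords n].
  by rewrite /coords !inE !eqxx !orbT.
split=> [n m n_gt0 m_gt0 | x].
  have [[i1 i2 i3] [j1 j2 j3]] := (coords_mem n, coords_mem m).
  case: (ltngtP n m) => [lt_nm | lt_mn | eq_nm].
  - by split; apply: coords_neq lt_nm _ _.
  - by split=> eq_v; apply: (coords_neq lt_mn _ _ (esym eq_v)).
  - move=> {i1 i2 i3 j1 j2 j3}; case: n n_gt0 eq_nm => // n _ <-.
    have [lt12 lt23] := (v1_lt_v2 n, v2_lt_v3 n).
    have lt13 := ltn_trans lt12 lt23.
    by split=> eq_v; [move: lt12 | move: lt13 | move: lt23]; rewrite eq_v ltnn.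
split=> [x_gt0 | [[|n] // _ x_eq]].
  case/FsetP: (Fset_hist_self x) => [[|k] _ x_in].
    by move: x_in x_gt0; rewrite /coords !inE !orbb => /eqP->.
  by exists k.+1 => //; move: x_in; rewrite /coords !inE => /or3P[] /eqP; constructor.
by apply: (@coordsS_gt0 n); case: x_eq => ->; rewrite /coords !inE eqxx ?orbT.
Qed.
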